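(* Let $u\in U$ and let $\Phi$ be a continuous Young function satisfying the $\Delta_2$ condition. Then: (1) for all $f\in wL_\Phi^u(\mathbb{R}^n)$ and all $x\in\mathbb{R}^n$, we have $L_xf\in wL_\Phi^u(\mathbb{R}^n)$ and $\|L_xf\|_{wL_\Phi^u(\mathbb{R}^n)} \le u(x)\|f\|_{wL_\Phi^u(\mathbb{R}^n)}$; (2) if $f\in wL_\Phi^u(\mathbb{R}^n)$ and $f\neq 0$, then there is a constant $C>0$ (depending on $f$) such that $\frac{u(x)}{C} \le \|L_xf\|_{wL_\Phi^u(\mathbb{R}^n)} \le C u(x)$ for all $x \in \mathbb{R}^n$.
   Context: $U$ denotes the set of all functions $u:\mathbb{R}^n\to(0,\infty)$ such that $u(x+y)\le u(x)u(y)$ for all $x,y\in\mathbb{R}^n$. A Young function is a function $\Phi:[0,\infty)\to[0,\infty)$ that is convex, left-continuous, satisfies $\lim_{t\to0}\Phi(t)=0=\Phi(0)$ and $\lim_{t\to\infty}\Phi(t)=\infty$. $\Phi$ satisfies the $\Delta_2$ condition if there is $K>0$ with $\Phi(2t)\le K\Phi(t)$ for all $t\ge0$. For a Young function $\Phi$ and a weight $u:\mathbb{R}^n\to(0,\infty)$, the weighted weak Orlicz space $wL_\Phi^u(\mathbb{R}^n)$ is the set of measurable $f:\mathbb{R}^n\to\mathbb{R}$ with $\|f\|_{wL_\Phi^u(\mathbb{R}^n)} := \inf\{ b>0 : \sup_{t>0} \Phi(t)\,|\{x\in\mathbb{R}^n : |u(x)f(x)|/b > t\}| \le 1\} < \infty$,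 where $|\cdot|$ is Lebesgue measure. For $x\in\mathbb{R}^n$, the translation $L_xf$ is defined by $L_xf(y):=f(y-x)$. *)

(* R^n is modelled as 'rV[R]_n over R : realType. *)
From HB Require Import structures.
From mathcomp Require Import all_boot all_order all_algebra.
From mathcomp Require Import all_classical all_reals all_analysis.
Set Implicit Arguments. Unset Strict Implicit. Unset Printing Implicit Defensive.
Import Order.TTheory GRing.Theory Num.Theory.
Import numFieldNormedType.Exports.
Local Open Scope classical_set_scope.
Local Open Scope ring_scope.

Section Defs.
Variables (R : realType) (n : nat).

Definition box (a b : 'rV[R]_n) : set 'rV[R]_n :=
  [set x | forall i : 'I_n, a ord0 i <= x ord0 i < b ord0 i].

Definition box_vol (a b : 'rV[R]_n) : \bar R :=
  (\prod_(i < n) Num.max (b ord0 i - a ord0 i) 0)%:E.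

(* Lebesgue (outer) measure on R^n: infimum of the total volume of
   countable covers by boxes.  On Lebesgue measurable sets it is the
   Lebesgue measure |.| . *)
Definition leb_outer (A : set 'rV[R]_n) : \bar R :=
  ereal_inf [set e | exists a b : nat -> 'rV[R]_n,
     A `<=` \bigcup_k box (a k) (b k) /\
     e = (\sum_(0 <= k <oo) box_vol (a k) (b k))%E].

Definition leb_measurable (A : set 'rV[R]_n) : Prop :=
  forall E : set 'rV[R]_n,
    leb_outer E = (leb_outer (E `&` A) + leb_outer (E `&` ~` A))%E.

Definition leb_measurable_fun (f : 'rV[R]_n -> R) : Prop :=
  forall t : R, leb_measurable [set x | t < f x].

Definition weightU (u : 'rV[R]_n -> R) : Prop :=
  (forall x, 0 < u x) /\ (forall x y, u (x + y) <= u x * u y).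

Definition transl (x : 'rV[R]_n) (f : 'rV[R]_n -> R) : 'rV[R]_n -> R :=
  fun y => f (y - x).

(* Weak Orlicz (quasi)norm, as an extended real (inf over the empty set
   is +oo). *)
Definition wOrlicz_norm (Phi : R -> R) (u f : 'rV[R]_n -> R) : \bar R :=
  ereal_inf [set b%:E | b in [set b : R | 0 < b /\
     (ereal_sup [set ((Phi t)%:E *
                      leb_outer [set x | (t < `|u x * f x| / b)%R])%E
                 | t in [set t : R | (0 < t)%R]] <= 1%E)%E]].

Definition in_wOrlicz (Phi : R -> R) (u f : 'rV[R]_n -> R) : Prop :=
  leb_measurable_fun f /\ (wOrlicz_norm Phi u f < +oo)%E.
End Defs.

(* Young functions, considered on [0, +oo). *)
Definition young_fun (R : realType) (Phi : R -> R) : Prop :=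
  [/\ (forall t, 0 <= t -> 0 <= Phi t),
      (forall s t l, 0 <= s -> 0 <= t -> 0 <= l <= 1 ->
          Phi (l * s + (1 - l) * t) <= l * Phi s + (1 - l) * Phi t),
      (forall t, 0 < t -> Phi s @[s --> t^'-] --> Phi t),
      Phi 0 = 0 /\ Phi s @[s --> 0^'+] --> 0
    & Phi s @[s --> +oo] --> +oo].

Definition cont_on_nonneg (R : realType) (Phi : R -> R) : Prop :=
  {within `[0, +oo[, continuous Phi}.

Definition Delta2 (R : realType) (Phi : R -> R) : Prop :=
  exists K : R, 0 < K /\ forall t, 0 <= t -> Phi (2 * t) <= K * Phi t.

(* Translation moves every level set of a function rigidly, and Lebesgue outer
   measure is translation invariant; hence a pointwise bound
   a |v g| <= |w h| between translates gives a ||g||_v <= ||h||_w between weak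
   Orlicz norms.  Submultiplicativity gives u(y) <= u(x) u(y - x), whence
   ||L_x f||_u <= u(x) ||f||_u, and u(x) <= u(y) u(x - y), whence
   u(x) ||f||_v <= ||L_x f||_u for the dual weight v(z) = 1/u(-z).  For the
   two-sided bound it remains to see that ||f||_v is finite (the case x = 0)
   and positive: a vanishing weak norm forces every level set {|u f| > s} to
   be null since Phi tends to +oo, so f = 0 almost everywhere by countable
   subadditivity. *)

From HB Require Import structures.
From mathcomp Require Import all_boot all_order all_algebra.
From mathcomp Require Import all_classical all_reals all_analysis.
From mathcomp Require Import lra.
Import Order.TTheory GRing.Theory Num.Theory.
Local Open Scope classical_set_scope.
Local Open Scope ring_scope.
Set Implicit Arguments. Unset Strict Implicit. Unset Printing Implicit Defensive.

Section leb_outer.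
Variables (R : realType) (n : nat).
Local Open Scope ereal_scope.
Implicit Types A B : set 'rV[R]_n.

Lemma box_vol_ge0 (a b : 'rV[R]_n) : 0 <= box_vol a b.
Proof. by rewrite lee_fin; apply: prodr_ge0 => i _; rewrite le_max lexx orbT. Qed.

Lemma leb_outer_ge0 A : 0 <= leb_outer A.
Proof.
apply: le_ereal_inf_tmp => _ [a [b [_ ->]]].
by apply: nneseries_ge0 => k _ _; exact: box_vol_ge0.
Qed.

Lemma le_leb_outer A B : A `<=` B -> leb_outer A <= leb_outer B.
Proof.
move=> AB; apply: ereal_inf_le_tmp => _ [a [b [cov ->]]].
by exists a, b; split => //; exact: subset_trans cov.
Qed.

Lemma leb_outer_cover_adherent A (e : R) : (0 < e)%R -> leb_outer A < +oo ->
  exists a b, A `<=` \bigcup_k box (a k) (b k) /\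
    \sum_(0 <= k <oo) box_vol (a k) (b k) <= leb_outer A + e%:E.
Proof.
move=> e0 Afin; have /(lb_ereal_inf_adherent e0) : leb_outer A \is a fin_num.
  by rewrite ge0_fin_numE ?leb_outer_ge0.
by move=> [_ [a [b [cov ->]]] /ltW]; exists a, b.
Qed.

Lemma leb_outer_bigcup2_box (a b : nat -> nat -> 'rV[R]_n) :
  leb_outer (\bigcup_i \bigcup_j box (a i j) (b i j)) <=
  \sum_(0 <= i <oo) \sum_(0 <= j <oo) box_vol (a i j) (b i j).
Proof.
have /card_esym/ppcard_eqP[f] := card_nat2.
pose vol (p : nat * nat) := box_vol (a p.1 p.2) (b p.1 p.2).
have vol_ge0 p : 0 <= vol p by exact: box_vol_ge0.
have -> : \sum_(0 <= i <oo) \sum_(0 <= j <oo) box_vol (a i j) (b i j) =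
          \sum_(0 <= k <oo) vol (f k).
  rewrite [RHS]nneseries_esumT// [LHS]nneseries_esumT; last first.
    by move=> i; apply: nneseries_ge0 => j _ _; exact: box_vol_ge0.
  have inner i : \sum_(0 <= j <oo) box_vol (a i j) (b i j) = \esum_(j in setT) vol (i, j).
    by apply: nneseries_esumT => j; exact: box_vol_ge0.
  rewrite (eq_esum (fun i _ => inner i)) esum_esum//.
  rewrite (_ : _ `*`` _ = setT); last by apply/seteqP; split.
  under eq_esum do rewrite -surjective_pairing.
  by apply: reindex_esum; exact: bij.
apply: ereal_inf_lbound; exists (fun k => a (f k).1 (f k).2), (fun k => b (f k).1 (f k).2).
split => // y [i _ [j _ yij]]; exists (f^-1%FUN (i, j)) => //.
by rewrite invK ?inE.
Qed.

Lemma leb_outer_sigma_subadditive (A : (set 'rV[R]_n)^nat) :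
  leb_outer (\bigcup_k A k) <= \sum_(0 <= k <oo) leb_outer (A k).
Proof.
have [[i Aioo]|] := pselect (exists i, leb_outer (A i) = +oo).
  rewrite (eseries_pinfty _ _ Aioo) ?leey// => k _.
  by rewrite gt_eqF// (lt_le_trans _ (leb_outer_ge0 _)).
rewrite -forallNE => Afin; apply/lee_addgt0Pr => e e0.
apply: le_trans (epsilon_trick _ (fun k => leb_outer_ge0 (A k)) (ltW e0)).
have cover k : exists ab : (nat -> 'rV[R]_n) * (nat -> 'rV[R]_n),
    A k `<=` \bigcup_j box (ab.1 j) (ab.2 j) /\
    \sum_(0 <= j <oo) box_vol (ab.1 j) (ab.2 j) <=
      leb_outer (A k) + (e / (2 ^ k.+1)%:R)%:E.
  have ek0 : (0 < e / (2 ^ k.+1)%:R)%R by rewrite divr_gt0.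
  have [|a [b ab]] := @leb_outer_cover_adherent (A k) _ ek0.
    by rewrite ltey; apply/eqP; exact: Afin.
  by exists (a, b).
have [G GP] := choice cover.
apply: (@le_trans _ _ (leb_outer (\bigcup_i \bigcup_j box ((G i).1 j) ((G i).2 j)))).
  by apply: le_leb_outer => y [k _ /(GP k).1 [j _ yj]]; exists k => //; exists j.
apply: le_trans (leb_outer_bigcup2_box _ _) _.
apply: lee_nneseries => [k _ _|k _]; last exact: (GP k).2.
by apply: nneseries_ge0 => j _ _; exact: box_vol_ge0.
Qed.

Lemma leb_outer_transl (P : set 'rV[R]_n) (x : 'rV[R]_n) :
  leb_outer [set y | P (y - x)%R] = leb_outer P.
Proof.
have le_transl (Q : set 'rV[R]_n) z : leb_outer [set y | Q (y - z)%R] <= leb_outer Q.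
  apply: ereal_inf_le_tmp => _ [a [b [cov ->]]].
  exists (fun k => a k + z)%R, (fun k => b k + z)%R; split.
    move=> y /= /cov [k _ yk]; exists k => // i.
    by have := yk i; rewrite !mxE lerBrDr ltrBlDr.
  apply: eq_eseriesr => k _; congr (_%:E); apply: eq_bigr => i _.
  by rewrite !mxE opprD addrACA subrr addr0.
apply/eqP; rewrite eq_le le_transl /=.
have := le_transl [set y | P (y - x)%R] (- x)%R.
by apply: le_trans; apply: le_leb_outer => y Py /=; rewrite opprK addrK.
Qed.

Lemma leb_measurable_transl (P : set 'rV[R]_n) (x : 'rV[R]_n) :
  leb_measurable P -> leb_measurable [set y | P (y - x)%R].
Proof.
move=> mP E.
have shift (Q : set 'rV[R]_n) : leb_outer Q = leb_outer [set y | Q (y + x)%R].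
  rewrite -[RHS](leb_outer_transl _ x); congr leb_outer.
  by apply/seteqP; split => y /=; rewrite subrK.
rewrite shift mP -(leb_outer_transl (_ `&` P) x) -(leb_outer_transl (_ `&` ~` P) x).
by congr (_ + _); congr leb_outer; apply/seteqP; split => y /=; rewrite subrK.
Qed.
End leb_outer.

Lemma cvgy_mule_gt1 (R : realType) (g : R -> R) (L : \bar R) :
  g t @[t --> +oo] --> +oo -> (0 < L)%E -> \forall t \near +oo, (1 < (g t)%:E * L)%E.
Proof.
move=> gy; case: L => [r||] //; rewrite ?lte_fin => r0.
  have /cvgryPge/(_ (2 / r)) := gy; apply: filterS => t gt.
  rewrite -EFinM lte_fin (lt_le_trans _ (ler_wpM2r (ltW r0) gt)) // divfK ?gt_eqF //.
  by rewrite ltr1n.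
have /cvgryPge/(_ 1) := gy; apply: filterS => t gt.
by rewrite gt0_muley ?ltry // lte_fin (lt_le_trans ltr01 gt).
Qed.

Section weak_orlicz_norm.
Variables (R : realType) (n : nat) (Phi : R -> R).
Local Open Scope ereal_scope.
Implicit Types (u v w f g h : 'rV[R]_n -> R).

Lemma wOrlicz_norm_ge0 u f : 0 <= wOrlicz_norm Phi u f.
Proof. by apply: le_ereal_inf_tmp => _ [b [b0 _] <-]; rewrite lee_fin ltW. Qed.

Lemma wOrlicz_norm_transl x v g :
  wOrlicz_norm Phi (transl x v) (transl x g) = wOrlicz_norm Phi v g.
Proof.
have level t b : leb_outer [set y | (t < `|transl x v y * transl x g y| / b)%R] =
                 leb_outer [set y | (t < `|v y * g y| / b)%R].
  exact: (leb_outer_transl [set y | (t < `|v y * g y| / b)%R]).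
rewrite /wOrlicz_norm; congr ereal_inf; congr image; apply/funext => b.
by congr (_ /\ _ <= 1); congr ereal_sup; congr image; apply/funext => t; rewrite level.
Qed.

Hypothesis Phi_ge0 : forall t, (0 <= t)%R -> (0 <= Phi t)%R.

Lemma le_wOrlicz_norm a v g w h : (0 < a)%R ->
  (forall y, a * `|v y * g y| <= `|w y * h y|)%R ->
  a%:E * wOrlicz_norm Phi v g <= wOrlicz_norm Phi w h.
Proof.
move=> a0 vgwh; apply: le_ereal_inf_tmp => _ [b [b0 hb] <-].
rewrite -lee_pdivlMl //; apply: ereal_inf_lbound; exists (a^-1 * b)%R; last by rewrite EFinM.
split; first by rewrite mulr_gt0 ?invr_gt0.
apply: le_trans hb; apply: ge_ereal_sup => _ [t t0 <-].
apply: (@le_trans _ _ ((Phi t)%:E * leb_outer [set y | (t < `|w y * h y| / b)%R])).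
  apply: lee_wpmul2l; first by rewrite lee_fin Phi_ge0 // ltW.
  apply: le_leb_outer => y /= /lt_le_trans; apply.
  by rewrite invfM invrK mulrA [(_ * a)%R]mulrC ler_pM2r ?invr_gt0.
by apply: ereal_sup_ubound; exists t.
Qed.

Lemma wOrlicz_norm_transl_le u f x : weightU u ->
  wOrlicz_norm Phi u (transl x f) <= (u x)%:E * wOrlicz_norm Phi u f.
Proof.
move=> [u_gt0 u_sub]; rewrite -lee_pdivrMl // -(wOrlicz_norm_transl x u f).
apply: le_wOrlicz_norm => [|y]; first by rewrite invr_gt0.
rewrite /transl !normrM !(gtr0_norm (u_gt0 _)) mulrA ler_wpM2r // ler_pdivrMl //.
by have := u_sub (y - x)%R x; rewrite subrK mulrC.
Qed.

Lemma in_wOrlicz_transl u f x : weightU u ->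
  in_wOrlicz Phi u f -> in_wOrlicz Phi u (transl x f).
Proof.
move=> uU [mf fin]; split; first by move=> t; exact: leb_measurable_transl (mf t).
apply: le_lt_trans (wOrlicz_norm_transl_le f x uU) _.
by rewrite lte_mul_pinfty // lee_fin ltW // uU.1.
Qed.

Definition dual_weight u : 'rV[R]_n -> R := fun z => ((u (- z))^-1)%R.

Lemma le_dual_wOrlicz_norm_transl u f x : weightU u ->
  (u x)%:E * wOrlicz_norm Phi (dual_weight u) f <= wOrlicz_norm Phi u (transl x f).
Proof.
move=> [u_gt0 u_sub]; rewrite -(wOrlicz_norm_transl x (dual_weight u)).
apply: le_wOrlicz_norm => // y.
rewrite /transl /dual_weight !normrM gtr0_norm ?invr_gt0 // (gtr0_norm (u_gt0 y)).
rewrite mulrA ler_wpM2r // opprB ler_pdivrMr //.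
by have := u_sub y (x - y)%R; rewrite addrC subrK.
Qed.

Hypothesis Phi_cvgy : (Phi t @[t --> +oo] --> +oo)%R.

Lemma wOrlicz_norm0_level_null u f s : wOrlicz_norm Phi u f = 0 -> (0 < s)%R ->
  leb_outer [set y | (s < `|u y * f y|)%R] = 0.
Proof.
move=> N0 s0; apply/eqP; rewrite eq_le leb_outer_ge0 andbT leNgt; apply/negP => Lpos.
(* Past some T, Phi t times the measure exceeds 1; an admissible b below
   s / (|T| + 1) puts t = s / b past T. *)
have [T [_ PhiT]] := cvgy_mule_gt1 Phi_cvgy Lpos.
have : wOrlicz_norm Phi u f < (s / (`|T| + 1))%:E by rewrite N0 lte_fin divr_gt0 // ltr_wpDl.
move/ereal_inf_lt => [_ [b [b0 hb] <-]]; rewrite lte_fin => bs.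
have Tsb : (T < s / b)%R.
  rewrite ltr_pdivlMr //; move: bs; rewrite ltr_pdivlMr ?ltr_wpDl // => bs.
  by have := ler_norm T; nra.
have := PhiT _ Tsb; apply/negP; rewrite -leNgt; apply: le_trans hb.
have -> : [set y | (s < `|u y * f y|)%R] = [set y | (s / b < `|u y * f y| / b)%R].
  by apply/seteqP; split => y /=; rewrite ltr_pM2r ?invr_gt0.
by apply: ereal_sup_ubound; exists (s / b)%R => //; exact: divr_gt0.
Qed.

Lemma wOrlicz_norm_gt0 u f : (forall y, 0 < u y)%R ->
  leb_outer [set y | f y != 0%R] != 0 -> 0 < wOrlicz_norm Phi u f.
Proof.
move=> u_gt0; apply: contraNT; rewrite -leNgt => Nle0.
have N0 : wOrlicz_norm Phi u f = 0 by apply/eqP; rewrite eq_le Nle0 wOrlicz_norm_ge0.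
rewrite eq_le leb_outer_ge0 andbT.
pose level k := [set y | ((k.+1%:R)^-1 < `|u y * f y|)%R].
apply: (@le_trans _ _ (leb_outer (\bigcup_k level k))).
  apply: le_leb_outer => y /= fy0.
  have uf_gt0 : (0 < `|u y * f y|)%R by rewrite normr_gt0 mulf_neq0 // gt_eqF.
  exists (Num.trunc (`|u y * f y|^-1)%R) => //=.
  by rewrite /level /= invf_plt ?posrE ?ltr0Sn // truncnS_gt.
apply: le_trans (leb_outer_sigma_subadditive level) _.
by rewrite eseries0 // => k _ _; apply: wOrlicz_norm0_level_null; rewrite ?invr_gt0.
Qed.

End weak_orlicz_norm.

Theorem lemma2p5 (R : realType) (n : nat) (u : 'rV[R]_n -> R) (Phi : R -> R) :
  weightU u -> young_fun Phi -> cont_on_nonneg Phi -> Delta2 Phi ->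
  (forall (f : 'rV[R]_n -> R) (x : 'rV[R]_n),
     in_wOrlicz Phi u f ->
     in_wOrlicz Phi u (transl x f) /\
     (wOrlicz_norm Phi u (transl x f) <= (u x)%:E * wOrlicz_norm Phi u f)%E) /\
  (forall f : 'rV[R]_n -> R,
     in_wOrlicz Phi u f -> leb_outer [set x | f x != 0] != 0%E ->
     exists C : R, 0 < C /\
       forall x : 'rV[R]_n,
         ((u x / C)%:E <= wOrlicz_norm Phi u (transl x f))%E /\
         (wOrlicz_norm Phi u (transl x f) <= (C * u x)%:E)%E).
Proof.
move=> uU [Phi_ge0 _ _ _ Phi_cvgy] _ _; have [u_gt0 _] := uU.
split=> [f x fW|f [_ Nfin] fnz].
  by split; [exact: in_wOrlicz_transl | exact: wOrlicz_norm_transl_le].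
set r := fine (wOrlicz_norm Phi u f).
have Nr : wOrlicz_norm Phi u f = r%:E by rewrite fineK // ge0_fin_numE // wOrlicz_norm_ge0.
have r_gt0 : 0 < r by rewrite -lte_fin -Nr wOrlicz_norm_gt0.
set c := fine (wOrlicz_norm Phi (dual_weight u) f).
have Nc : wOrlicz_norm Phi (dual_weight u) f = c%:E.
  have := le_dual_wOrlicz_norm_transl Phi_ge0 f 0 uU.
  rewrite (_ : transl 0 f = f); last by apply/funext => y; rewrite /transl subr0.
  rewrite Nr -lee_pdivlMl // => Nd_le.
  by rewrite fineK // ge0_fin_numE ?wOrlicz_norm_ge0 // (le_lt_trans Nd_le) // ltry.
have c_gt0 : 0 < c.
  by rewrite -lte_fin -Nc wOrlicz_norm_gt0 // => y; rewrite invr_gt0.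
have C_gt0 : 0 < Num.max r c^-1 by rewrite lt_max r_gt0.
exists (Num.max r c^-1); split => // x; split.
  apply: le_trans (le_dual_wOrlicz_norm_transl Phi_ge0 f x uU); rewrite Nc -EFinM lee_fin.
  rewrite ler_pdivrMr // -mulrA ler_peMr ?(ltW (u_gt0 x)) //.
  by rewrite -(mulfV (lt0r_neq0 c_gt0)) ler_pM2l // le_max lexx orbT.
apply: le_trans (wOrlicz_norm_transl_le Phi_ge0 f x uU) _.
by rewrite Nr -EFinM lee_fin mulrC ler_pM2r // le_max lexx.
Qed.
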